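(* For every $r\ge 3$ and all integers $3\le k_0\le k_1\le \cdots \le k_{r-1}$, \[ S(r;k_0,\dots,k_{r-1}) \ge \Bigl(\prod_{j=2}^{r-1}k_j\Bigr)S(2;k_0,k_1) -\sum_{i=2}^{r-1}\prod_{j=i+1}^{r-1}k_j \] (empty product equal to $1$). In particular, if $4\le s\le t\le k_2\le \cdots \le k_{r-1}$, then \[ S(r;s,t,k_2,\dots,k_{r-1}) \ge \Bigl(\prod_{j=2}^{r-1}k_j\Bigr)(st-t-1) -\sum_{i=2}^{r-1}\prod_{j=i+1}^{r-1}k_j. \]
   Context: For an integer $k\ge 3$, let $\mathcal{L}(k)$ denote the equation $x_1+x_2+\cdots+x_{k-1}=x_k$ in positive integer variables (the $x_i$ need not be distinct). For $N\ge1$, write $[1,N]=\{1,2,\dots,N\}$. For integers $r\ge1$ and $k_0,\dots,k_{r-1}\ge 3$, the generalized Schur number $S(r;k_0,\dots,k_{r-1})$ is the least positive integer $N$ such that for every coloring $\Delta:[1,N]\to\{0,1,\dots,r-1\}$ there exist some $i\in\{0,\dots,r-1\}$ and positive integers $x_1,\dots,x_{k_i}\in[1,N]$ satisfying $\mathcal{L}(k_i)$ with $\Delta(x_1)=\cdots=\Delta(x_{k_i})=i$. *)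

From mathcomp Require Import all_boot all_order all_algebra.
Set Implicit Arguments. Unset Strict Implicit. Unset Printing Implicit Defensive.

(* The colors are 0..r-1; the parameters k_0,...,k_{r-1} are given by a
   function k : nat -> nat (only the values k 0, ..., k (r-1) matter).
   A coloring of [1,N] with r colors is a function col : nat -> nat with
   col n < r for 1 <= n <= N (values outside [1,N] are irrelevant). *)

(* x_1, ..., x_m are encoded as x 0, ..., x (m-1); L(m) reads
   x 0 + ... + x (m-2) = x (m-1). *)
Definition mono_solution (N : nat) (col : nat -> nat) (i m : nat) : Prop :=
  exists x : nat -> nat,
    (forall j, j < m -> 1 <= x j <= N /\ col (x j) = i) /\
    \sum_(j < m.-1) x j = x m.-1.

Definition schur_prop (r : nat) (k : nat -> nat) (N : nat) : Prop :=
  forall col : nat -> nat, (forall n, 1 <= n <= N -> col n < r) ->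
    exists2 i, i < r & mono_solution N col i (k i).

Definition is_schur_number (r : nat) (k : nat -> nat) (N : nat) : Prop :=
  0 < N /\ schur_prop r k N /\ (forall M, 0 < M < N -> ~ schur_prop r k M).

(* Lower bounds come from explicit colorings of [1,M] without monochromatic
   solutions.  Given such an m-coloring and K = k_m, put d = (K-1)(M+1) - 1
   and color [1,M] as before, (M,d] with the new color m, and (d,d+M] by the
   translate of the old coloring.  Any K-1 elements of (M,d] sum to more than
   d, so the new color is safe; a solution in an old color i reduces modulo d
   to a solution in [1,M], because d exceeds both M and (k_i - 1)M.  So one more
   color turns S > M into S > K(M+1) - 2.  Iterating from a coloring of
   [1, S(2;k_0,k_1) - 1], or from the empty coloring (which already gives
   S(2;s,t) >= st - t - 1), yields both bounds. *)

From mathcomp Require Import all_boot all_order all_algebra zify.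
From Stdlib Require Import Classical.

Set Implicit Arguments.
Unset Strict Implicit.
Unset Printing Implicit Defensive.

Definition schur_free (k : nat -> nat) (m N : nat) (col : nat -> nat) : Prop :=
  (forall n, 1 <= n <= N -> col n < m) /\
  (forall i, i < m -> ~ mono_solution N col i (k i)).

Lemma mono_solution_widen N M col i K :
  N <= M -> mono_solution N col i K -> mono_solution M col i K.
Proof.
move=> NM [x [Hx Hsum]]; exists x; split=> // j /Hx [Hxj ->].
by split=> //; lia.
Qed.

Lemma schur_number_gt k m M N col :
  schur_free k m M col -> is_schur_number m k N -> M < N.
Proof.
move=> [Hcol Hfree] [_ [HN _]]; rewrite ltnNge; apply/negP => NM.
have [i im Hi] := HN col (fun n Hn => Hcol n ltac:(lia)).
exact: Hfree i im (mono_solution_widen NM Hi).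
Qed.

Lemma exists_schur_free k m N :
  ~ schur_prop m k N -> exists col, schur_free k m N col.
Proof.
move=> HN; apply: NNPP => Hno; apply: HN => col Hcol.
apply: NNPP => Hmono; apply: Hno; exists col; split=> // i im Hi.
by apply: Hmono; exists i.
Qed.

Lemma not_schur_prop0 k m : (forall i, i < m -> 0 < k i) -> ~ schur_prop m k 0.
Proof.
move=> Hk HS.
have [i im [x [Hx _]]] := HS (fun _ => 0) (fun n Hn => ltac:(lia)).
have [Hxi _] := Hx (k i).-1 ltac:(have := Hk i im; lia); lia.
Qed.

Lemma schur_free_pred_schur_number k m N :
  (forall i, i < m -> 0 < k i) -> is_schur_number m k N ->
  exists col, schur_free k m N.-1 col.
Proof.
move=> Hk [N0 [_ Hmin]]; apply: exists_schur_free.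
case: N N0 Hmin => [|[|N]] // _ Hmin; first exact: not_schur_prop0.
by apply: Hmin; rewrite ltnSn.
Qed.

Lemma mono_solution_interval N col i K a b :
  (forall n, 1 <= n <= N -> col n = i -> a <= n <= b) -> b < K.-1 * a ->
  ~ mono_solution N col i K.
Proof.
move=> Hab Hb [x [Hx Hsum]].
have Hin j : j < K -> a <= x j <= b by move=> /Hx [? ?]; exact: Hab.
have : K.-1 * a <= x K.-1.
  have : \sum_(j < K.-1) a <= \sum_(j < K.-1) x j.
    by apply: leq_sum => j _; have := Hin j ltac:(have := ltn_ord j; lia); lia.
  by rewrite sum_nat_const card_ord Hsum.
by have := Hin K.-1 ltac:(have : 0 < K.-1 by nia; lia); lia.
Qed.

(* The unshifted parts lie in [1,M] on the right and in [0,d] on the left, so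
   both sides must contain the same number of shifts by d. *)
Lemma sum_drop_shifts n M d (y : nat -> nat) (b : nat -> bool) :
  M < d -> n * M <= d -> (forall j, j <= n -> 1 <= y j <= M) ->
  \sum_(j < n) (y j + b j * d) = y n + b n * d -> \sum_(j < n) y j = y n.
Proof.
move=> Md nMd Hy; rewrite big_split -big_distrl /=.
have : \sum_(j < n) y j <= n * M.
  have : \sum_(j < n) y j <= \sum_(j < n) M.
    by apply: leq_sum => j _; have := Hy j (ltnW (ltn_ord j)); lia.
  by rewrite sum_nat_const card_ord mulnC.
have := Hy n (leqnn n).
set Y := \sum_(j < n) y j; set U := \sum_(j < n) b j.
case: (b n) => /=; case: U => [|[|U]]; nia.
Qed.

Definition stretch (col : nat -> nat) (M d c n : nat) : nat :=
  if n <= M then col n else if n <= d then c else col (n - d).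

Lemma stretch_mono_solution col M d c i K :
  i != c -> M < d -> K.-1 * M <= d ->
  mono_solution (d + M) (stretch col M d c) i K -> mono_solution M col i K.
Proof.
move=> ic Md KMd [x [Hx Hsum]].
case: K Hx Hsum KMd => [|K] Hx Hsum KMd; first by exists x.
pose y j := if x j <= M then x j else x j - d.
have Hy j : j < K.+1 ->
    [/\ 1 <= y j <= M, col (y j) = i & x j = y j + (M < x j) * d].
  move=> /Hx [Hxj]; rewrite /stretch /y.
  case: ifP => [xM Hc|xM].
    by rewrite [M < _]ltnNge xM /= mul0n addn0; split=> //; lia.
  case: ifP => [_ Hc|Hd Hc]; first by rewrite Hc eqxx in ic.
  by rewrite [M < _]ltnNge xM /= mul1n; split=> //; lia.
exists y; split=> [j /Hy [] //|].
apply: (@sum_drop_shifts K M d y (fun j => M < x j)) => // [j Hj|].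
  by have [] := Hy j Hj.
have [_ _ <-] := Hy K (ltnSn K); rewrite -Hsum /=.
by apply: eq_bigr => j _; have [_ _ <-] := Hy j (leqW (ltn_ord j)).
Qed.

Lemma stretch_schur_free k m M col :
  schur_free k m M col -> 3 <= k m -> (forall i, i < m -> k i <= k m) ->
  schur_free k m.+1 (k m * M.+1 - 2) (stretch col M ((k m).-1 * M.+1 - 1) m).
Proof.
move=> [Hcol Hfree] km3 Hle; set d := (k m).-1 * M.+1 - 1.
have Md : M < d by rewrite /d; clear -km3; nia.
have -> : k m * M.+1 - 2 = d + M by rewrite /d; clear -km3; nia.
have Hshift n : 1 <= n <= d + M -> d < n -> col (n - d) < m.
  by move=> Hn dn; apply: Hcol; lia.
split=> [n Hn|i].
  rewrite /stretch; case: ifP => [nM|_].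
    by have := Hcol n ltac:(lia); lia.
  by case: ifP => // nd; have := Hshift n Hn ltac:(lia); lia.
rewrite ltnS leq_eqVlt => /orP [/eqP ->|im].
  apply: (@mono_solution_interval _ _ _ _ M.+1 d) => [n Hn|]; last first.
    by rewrite /d; clear -km3; nia.
  rewrite /stretch; case: ifP => [nM Hc|nM].
    by have := Hcol n ltac:(lia); rewrite Hc ltnn.
  case: ifP => [nd _|nd Hc]; first by lia.
  by have := Hshift n Hn ltac:(lia); rewrite Hc ltnn.
move=> Hsol; apply: (Hfree i im); apply: (stretch_mono_solution _ Md _ Hsol).
- by rewrite neq_ltn im.
- by have := Hle i im; rewrite /d; clear -km3; nia.
Qed.

Lemma sum_suffix_prod_recr (k : nat -> nat) a m : a <= m ->
  \sum_(a <= i < m.+1) \prod_(i.+1 <= j < m.+1) k j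
  = (\sum_(a <= i < m) \prod_(i.+1 <= j < m) k j) * k m + 1.
Proof.
move=> am; rewrite big_nat_recr //= [X in _ + X]big_geq // big_distrl /=.
congr (_ + _).
by apply: eq_big_nat => i /andP [_ im]; rewrite big_nat_recr.
Qed.

Lemma schur_free_iter k r m0 m M0 col0 :
  schur_free k m0 M0 col0 -> (forall j, j < r -> 3 <= k j) ->
  (forall i j, i <= j < r -> k i <= k j) ->
  m0 <= m <= r -> exists M col, schur_free k m M col /\
    M.+1 + \sum_(m0 <= i < m) \prod_(i.+1 <= j < m) k j
    = (\prod_(m0 <= j < m) k j) * M0.+1.
Proof.
move=> free0 Hk3 Hmono; elim: m => [|m IH] /andP [m0m mr].
  move: m0m free0; rewrite leqn0 => /eqP -> free0.
  by exists M0, col0; rewrite !big_geq.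
move: m0m; rewrite leq_eqVlt ltnS => /orP [/eqP <-|m0m].
  by exists M0, col0; rewrite !big_geq.
have [M [col [free E]]] := IH ltac:(by rewrite m0m ltnW).
have km3 := Hk3 m mr.
exists (k m * M.+1 - 2), (stretch col M ((k m).-1 * M.+1 - 1) m); split.
  by apply: stretch_schur_free => // i im; apply: Hmono; rewrite ltnW.
rewrite sum_suffix_prod_recr // big_nat_recr //= mulnAC -E.
rewrite mulnDl [M.+1 * _]mulnC.
by have := leq_mul km3 (ltn0Sn M); lia.
Qed.

Lemma schur_free0 k col : schur_free k 0 0 col.
Proof. by split=> [n /andP [n1 n0]|//]; have := leq_trans n1 n0. Qed.

Lemma schur_number_lower_bound k r m0 M0 col0 N :
  schur_free k m0 M0 col0 -> m0 <= r ->
  (forall j, j < r -> 3 <= k j) -> (forall i j, i <= j < r -> k i <= k j) ->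
  is_schur_number r k N ->
  (\prod_(m0 <= j < r) k j) * M0.+1
    <= N + \sum_(m0 <= i < r) \prod_(i.+1 <= j < r) k j.
Proof.
move=> free0 m0r Hk3 Hmono HN.
have [M [col [free <-]]] :=
  schur_free_iter free0 Hk3 Hmono (m := r) ltac:(by rewrite m0r leqnn).
by rewrite leq_add2r; apply: schur_number_gt free HN.
Qed.

Lemma nondecreasing_below (k : nat -> nat) r :
  (forall i, i.+1 < r -> k i <= k i.+1) -> forall i j, i <= j < r -> k i <= k j.
Proof.
move=> Hstep i j /andP [ij jr].
apply: (@homo_leq_in _ [pred n | n < r] k (fun a b => a <= b) leqnn leq_trans)
  => //=; last exact: leq_ltn_trans ij jr.
- by move=> a b _ br c /andP [_ cb]; apply: ltn_trans cb br.
- by move=> a _; apply: Hstep.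
Qed.

Local Open Scope ring_scope.

Theorem corollary1 (r : nat) (k : nat -> nat) :
  (3 <= r)%N -> (3 <= k 0%N)%N -> (forall i, (i.+1 < r)%N -> (k i <= k i.+1)%N) ->
  (forall N N2 : nat, is_schur_number r k N -> is_schur_number 2 k N2 ->
     (N%:Z >= (\prod_(2 <= j < r) k j)%N%:Z * N2%:Z
              - (\sum_(2 <= i < r) \prod_(i.+1 <= j < r) k j)%N%:Z))
  /\
  ((4 <= k 0%N)%N -> forall N : nat, is_schur_number r k N ->
     (N%:Z >= (\prod_(2 <= j < r) k j)%N%:Z
                * ((k 0%N)%:Z * (k 1%N)%:Z - (k 1%N)%:Z - 1)
              - (\sum_(2 <= i < r) \prod_(i.+1 <= j < r) k j)%N%:Z)).
Proof.
move=> r3 k03 Hstep; have Hmono := nondecreasing_below Hstep.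
have Hk3 j : (j < r)%N -> (3 <= k j)%N.
  by move=> jr; apply: leq_trans k03 (Hmono 0%N j _); rewrite jr.
have r2 : (2 <= r)%N by apply: ltnW.
set P := (\prod_(2 <= j < r) k j)%N; set S := (\sum_(2 <= i < r) _)%N.
split=> [N N2 HN HN2 | _ N HN].
- have [col0 free0] : exists col, schur_free k 2 N2.-1 col.
    apply: schur_free_pred_schur_number HN2 => i i2.
    by have := Hk3 i (leq_trans i2 r2); lia.
  have := schur_number_lower_bound free0 r2 Hk3 Hmono HN.
  rewrite prednK; last by case: HN2.
  rewrite -/P -/S; lia.
- have [M [col [free EM]]] :=
    schur_free_iter (schur_free0 k (fun=> 0%N)) Hk3 Hmono (m := 2%N) r2.
  rewrite /index_iota /= !big_cons !big_nil /= !muln1 in EM.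
  have -> : (k 0%N)%:Z * (k 1%N)%:Z - (k 1%N)%:Z - 1 = M.+1 by lia.
  have := schur_number_lower_bound free r2 Hk3 Hmono HN.
  rewrite -/P -/S; lia.
Qed.
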